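(* Let $d\ge 6$, $c\in[d]$, and let $\mathcal{F}\subseteq 2^{[n]}$ be a hereditary family with $\delta(\mathcal{F})\ge 2^{d-1}-c+1$. Then every bad vertex $x$ is contained in exactly one pile, namely $N(x)$. In particular, every vertex of $[n]$ that is not contained in any pile is good.
   Context: A family $\mathcal{F}\subseteq 2^{[n]}$ is hereditary if $F'\subseteq F\in\mathcal{F}$ implies $F'\in\mathcal{F}$. $d_{\mathcal{F}}(x)=|\{F\in\mathcal{F}:x\in F\}|$, $\delta(\mathcal{F})=\min_x d_{\mathcal{F}}(x)$, $N(x)=\bigcup_{x\in F\in\mathcal{F}}F$. Under the hypothesis $\delta(\mathcal{F})\ge 2^{d-1}-c+1$ every vertex has $|N(x)|\ge d$; a vertex $x$ is good if $|N(x)|\ge d+1$ and bad if $|N(x)|=d$. A set $P\subseteq[n]$ with $|P|=d$ is a pile of $\mathcal{F}$ if $P\subseteq N(y)$ for every $y\in P$, and there exists $z\in P$ with $N(z)=P$. *)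

From mathcomp Require Import all_boot.
Set Implicit Arguments. Unset Strict Implicit. Unset Printing Implicit Defensive.

Definition hereditary (n : nat) (F : {set {set 'I_n}}) : Prop :=
  forall A B : {set 'I_n}, A \subset B -> B \in F -> A \in F.

Definition deg (n : nat) (F : {set {set 'I_n}}) (x : 'I_n) : nat :=
  #|[set A in F | x \in A]|.

Definition nbhd (n : nat) (F : {set {set 'I_n}}) (x : 'I_n) : {set 'I_n} :=
  \bigcup_(A in F | x \in A) A.

Definition min_deg_ge (n : nat) (F : {set {set 'I_n}}) (k : nat) : Prop :=
  forall x : 'I_n, k <= deg F x.

Definition good (n d : nat) (F : {set {set 'I_n}}) (x : 'I_n) : Prop :=
  d.+1 <= #|nbhd F x|.

Definition bad (n d : nat) (F : {set {set 'I_n}}) (x : 'I_n) : Prop :=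
  #|nbhd F x| = d.

Definition pile (n d : nat) (F : {set {set 'I_n}}) (P : {set 'I_n}) : Prop :=
  [/\ #|P| = d,
      (forall y, y \in P -> P \subset nbhd F y) &
      exists2 z, z \in P & nbhd F z = P].

(* A vertex x only lies in members of F contained in N(x), so d(x) is at most
   the number 2^(|N(x)|-1) of subsets of N(x) containing x; if moreover some
   S ⊆ N(x) with x ∈ S lies in no member, the 2^(|N(x)|-|S|) supersets of S are
   also excluded.  With d(x) >= 2^(d-1) - d + 1 and d >= 6 the first count forces
   |N(x)| >= d, and for a bad x the second one, applied to S = {x, y, w}, shows
   that any two y, w in N(x) lie in a common member with x.  Hence N(x) ⊆ N(y)
   for every y in N(x), so N(x) is a pile, and any pile through x is contained
   in N(x) and has the same size. *)

From mathcomp Require Import all_boot zify.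
Set Implicit Arguments. Unset Strict Implicit. Unset Printing Implicit Defensive.

Lemma card_supsets (T : finType) (N S : {set T}) : S \subset N ->
  #|[set A in powerset N | S \subset A]| = 2 ^ (#|N| - #|S|).
Proof.
move=> sSN.
have -> : [set A in powerset N | S \subset A] = [set B :|: S | B in powerset (N :\: S)].
  apply/setP=> A; rewrite !inE; apply/andP/imsetP.
  - case=> AN SA; exists (A :\: S); first by rewrite inE setSD.
    by rewrite -{1}(setID A S) (setIidPr SA) setUC.
  - case=> B; rewrite inE => BNS ->; rewrite subUset sSN subsetUr andbT.
    by rewrite (subset_trans BNS (subsetDl N S)).
rewrite card_in_imset ?card_powerset ?cardsD ?(setIidPr sSN) //.
have UDK (B : {set T}) : B \subset N :\: S -> (B :|: S) :\: S = B.
  move=> sB; apply/setP=> z; rewrite !inE; case: (boolP (z \in B)) => [zB | _].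
    by move/(subsetP sB): zB; rewrite inE => /andP [->].
  by rewrite andNb.
by move=> B1 B2; rewrite !inE => sB1 sB2 eqB; rewrite -(UDK _ sB1) -(UDK _ sB2) eqB.
Qed.

Lemma leq_exp2_sub3 d : 6 <= d -> d <= 2 ^ (d - 3).
Proof.
elim: d => // d IH; rewrite leq_eqVlt => /orP [/eqP <- // | lt5d].
have := IH lt5d; have := expn_gt0 2 (d - 3).
by rewrite subSn; [rewrite expnS; lia | lia].
Qed.

Section Neighbourhoods.

Variables (n : nat) (F : {set {set 'I_n}}).

Lemma sub_nbhd x A : A \in F -> x \in A -> A \subset nbhd F x.
Proof. by move=> AF xA; rewrite /nbhd (bigcup_sup A) // AF xA. Qed.

Lemma nbhd_mem x : 0 < deg F x -> x \in nbhd F x.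
Proof.
rewrite /deg card_gt0 => /set0Pn [A]; rewrite inE => /andP [AF xA].
exact: subsetP (sub_nbhd AF xA) x xA.
Qed.

Lemma link_sub_supsets x :
  [set A in F | x \in A] \subset [set A in powerset (nbhd F x) | [set x] \subset A].
Proof.
apply/subsetP=> A; rewrite !inE sub1set => /andP [AF xA].
by rewrite xA andbT; apply: sub_nbhd.
Qed.

Lemma deg_le_exp_nbhd x : deg F x <= 2 ^ (#|nbhd F x| - 1).
Proof.
have [-> // | /nbhd_mem xN] := posnP (deg F x); rewrite -sub1set in xN.
have := card_supsets xN; rewrite cards1 => <-.
exact: subset_leq_card (link_sub_supsets x).
Qed.

Lemma deg_add_exp_le_missing x (S : {set 'I_n}) :
  x \in S -> S \subset nbhd F x -> (forall A, A \in F -> ~~ (S \subset A)) ->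
  deg F x + 2 ^ (#|nbhd F x| - #|S|) <= 2 ^ (#|nbhd F x| - 1).
Proof.
move=> xS SN missS.
set G := [set A in F | x \in A]; set K := [set A in powerset (nbhd F x) | S \subset A].
have xN : [set x] \subset nbhd F x by rewrite sub1set (subsetP SN).
have KG : [disjoint G & K].
  rewrite -setI_eq0; apply/eqP/setP=> A; rewrite !inE.
  by apply/negP=> /andP [/andP [AF _] /andP [_ SA]]; move: (missS A AF); rewrite SA.
rewrite /deg -/G -(card_supsets SN).
have := card_supsets xN; rewrite cards1 => <-.
rewrite -(eqTleqif (leq_card_setU G K) KG); apply: subset_leq_card.
rewrite subUset link_sub_supsets; apply/subsetP=> A; rewrite !inE => /andP [-> SA].
by rewrite sub1set (subsetP SA).
Qed.

Lemma pile_eq_nbhd d (P : {set 'I_n}) x :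
  #|nbhd F x| = d -> pile d F P -> x \in P -> P = nbhd F x.
Proof.
move=> cardN [cardP subP _] xP; apply/eqP.
by rewrite eqEcard (subP x xP) cardP cardN leqnn.
Qed.

End Neighbourhoods.

Section MinimumDegree.

Variables (n d c : nat) (F : {set {set 'I_n}}).
Hypotheses (d_ge6 : 6 <= d) (c_le_d : c <= d).
Hypothesis mindeg : min_deg_ge F (2 ^ d.-1 - c + 1).

Let d_le_exp : d <= 2 ^ (d - 3) := leq_exp2_sub3 d_ge6.
Let exp_d1 : 2 ^ d.-1 = 4 * 2 ^ (d - 3).
Proof. by rewrite -(expnD 2 2); congr (2 ^ _); lia. Qed.

Lemma mem_nbhd x : x \in nbhd F x.
Proof. by apply: nbhd_mem; apply: leq_trans (mindeg x); rewrite addn1. Qed.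

Lemma leq_card_nbhd x : d <= #|nbhd F x|.
Proof.
rewrite leqNgt; apply/negP=> small.
have := leq_trans (mindeg x) (deg_le_exp_nbhd F x).
have : 2 ^ (#|nbhd F x| - 1) <= 2 ^ (d - 3) * 2.
  by rewrite -expnSr leq_exp2l //; lia.
lia.
Qed.

Lemma bad_common_member x y w : bad d F x ->
  y \in nbhd F x -> w \in nbhd F x ->
  exists2 A, A \in F & [&& x \in A, y \in A & w \in A].
Proof.
move=> badx yN wN; set S := [set x; y; w].
have [A AF SA] : exists2 A, A \in F & S \subset A.
  apply/exists_inP; apply: contraT; rewrite negb_exists_in => /forall_inP missS.
  have SN : S \subset nbhd F x by rewrite !subUset !sub1set mem_nbhd yN wN.
  have cardS : #|S| <= 3 by rewrite !cardsU !cards1; lia.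
  have xS : x \in S by rewrite !inE eqxx.
  have := deg_add_exp_le_missing xS SN missS; rewrite badx subn1 => le_sum.
  have : deg F x + 2 ^ (d - 3) <= 2 ^ d.-1.
    by apply: leq_trans le_sum; rewrite leq_add2l leq_exp2l // leq_sub2l.
  have := mindeg x; lia.
by exists A; rewrite // !(subsetP SA) // !inE eqxx ?orbT.
Qed.

Lemma bad_nbhd_pile x : bad d F x -> pile d F (nbhd F x).
Proof.
move=> badx; split=> //; last by exists x; rewrite ?mem_nbhd.
move=> y yN; apply/subsetP=> w wN.
have [A AF /and3P [_ yA wA]] := bad_common_member badx yN wN.
exact: subsetP (sub_nbhd AF yA) w wA.
Qed.

Lemma bad_nbhd_unique_pile x : bad d F x ->
  [/\ pile d F (nbhd F x), x \in nbhd F x &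
      forall P, pile d F P -> x \in P -> P = nbhd F x].
Proof.
move=> badx; split; [exact: bad_nbhd_pile | exact: mem_nbhd |].
by move=> P; apply: pile_eq_nbhd.
Qed.

Lemma good_of_notin_piles x : (forall P, pile d F P -> x \notin P) -> good d F x.
Proof.
move=> nopile; have := leq_card_nbhd x; rewrite leq_eqVlt => /orP [/eqP cardN | //].
by move: (nopile _ (bad_nbhd_pile (esym cardN))); rewrite mem_nbhd.
Qed.

End MinimumDegree.

Theorem mainTheorem13 (n d c : nat) (F : {set {set 'I_n}}) :
  6 <= d -> 1 <= c <= d ->
  hereditary F ->
  min_deg_ge F (2 ^ d.-1 - c + 1) ->
  (forall x : 'I_n, bad d F x ->
     [/\ pile d F (nbhd F x), x \in nbhd F x &
         forall P : {set 'I_n}, pile d F P -> x \in P -> P = nbhd F x])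
  /\
  (forall x : 'I_n, (forall P : {set 'I_n}, pile d F P -> x \notin P) ->
     good d F x).
Proof.
move=> d_ge6 /andP [_ c_le_d] _ mindeg.
split; first exact: bad_nbhd_unique_pile d_ge6 c_le_d mindeg.
exact: good_of_notin_piles d_ge6 c_le_d mindeg.
Qed.
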